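(* Let $k\in\{\mathbb F_2,\mathbb F_3,\mathbb F_5\}$, $R\in\operatorname{Ob}(\hat{\mathcal C})$, $G=\mathrm{SL}_2(R)$, $\bar\rho:G\to\mathrm{GL}_2(k)$ induced by reduction and $\iota:G\hookrightarrow\mathrm{GL}_2(R)$ the inclusion. (i) There exists a lift of $\bar\rho$ to $\mathbb Z_2$, $\mathbb Z_3$, respectively $\mathbb Z_5[\sqrt5]$ (according as $k=\mathbb F_2,\mathbb F_3,\mathbb F_5$). (ii) There is no $R\in\operatorname{Ob}(\hat{\mathcal C})$ for which $\iota$ is a universal lift of $\bar\rho$.
   Context: $\hat{\mathcal C}$ is the category of complete noetherian local commutative rings with residue field $k$, with local homomorphisms inducing the identity on $k$; $\mathfrak m_S$ is the maximal ideal of $S$. For a profinite group $G$ and continuous $\bar\rho:G\to\mathrm{GL}_n(k)$, a lift to $S\in\hat{\mathcal C}$ is a continuous $\rho:G\to\mathrm{GL}_n(S)$ reducing to $\bar\rho$; lifts are strictly equivalent if conjugate by an element of $I+M_n(\mathfrak m_S)$; $\mathrm{Def}_{\bar\rho}(S)$ is the set of strict equivalence classes. A lift $\rho$ to $R$ is universal if $f\mapsto[\mathrm{GL}_n(f)\circ\rho]$ ($\mathrm{GL}_n(f)$ applies $f$ entrywise) is a natural isomorphism $\mathrm{Hom}_{\hat{\mathcal C}}(R,-)\to\mathrm{Def}_{\bar\rho}$. $\mathrm{SL}_n(R)$ carries its profinite topology. *)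

From HB Require Import structures.
From mathcomp Require Import all_boot all_order all_algebra.
From mathcomp Require Import boolp.
From mathcomp Require Import ring lra zify.
Set Implicit Arguments. Unset Strict Implicit. Unset Printing Implicit Defensive.
Import Order.TTheory GRing.Theory Num.Theory.
Local Open Scope ring_scope.

Lemma modz_dvdl (a d e : int) : modz (modz a (d * e)) d = modz a d.
Proof.
apply/eqP; rewrite eqz_mod_dvd.
have -> : modz a (d * e) - a = - (divz a (d * e) * e) * d.
  by rewrite {2}(divz_eq a (d * e)); ring.
by rewrite dvdz_mull.
Qed.

Section Padic.
Variable q : nat.
Definition padic_mod (n : nat) : int := (q.+2)%:Z ^+ n.
Definition padic_compat (x : nat -> int) :=
  forall n, x n = modz (x n.+1) (padic_mod n).

Record padic := Padic { pval : nat -> int; pvalP : padic_compat pval }.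

HB.instance Definition _ := gen_eqMixin padic.
HB.instance Definition _ := gen_choiceMixin padic.

Lemma padic_eq (x y : padic) : pval x =1 pval y -> x = y.
Proof.
case: x => f fP; case: y => g gP /= /funext E; subst g.
by congr Padic; apply: Prop_irrelevance.
Qed.

Lemma pnorm (x : padic) n : modz (pval x n) (padic_mod n) = pval x n.
Proof. by rewrite {2}(pvalP x n) {1}(pvalP x n) modz_mod. Qed.

Lemma modS a n : modz (modz a (padic_mod n.+1)) (padic_mod n) = modz a (padic_mod n).
Proof. by rewrite /padic_mod exprSr modz_dvdl. Qed.

Lemma padd_compat (x y : padic) :
  padic_compat (fun n => modz (pval x n + pval y n) (padic_mod n)).
Proof. by move=> n; rewrite modS (pvalP x n) (pvalP y n) modzDm. Qed.
Lemma pmul_compat (x y : padic) :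
  padic_compat (fun n => modz (pval x n * pval y n) (padic_mod n)).
Proof. by move=> n; rewrite modS (pvalP x n) (pvalP y n) modzMm. Qed.
Lemma popp_compat (x : padic) :
  padic_compat (fun n => modz (- pval x n) (padic_mod n)).
Proof. by move=> n; rewrite modS (pvalP x n) modzNm. Qed.
Lemma pone_compat : padic_compat (fun n => modz 1 (padic_mod n)).
Proof. by move=> n; rewrite modS. Qed.
Lemma pzero_compat : padic_compat (fun n => 0).
Proof. by move=> n; rewrite mod0z. Qed.

Definition padd x y := Padic (padd_compat x y).
Definition pmul x y := Padic (pmul_compat x y).
Definition popp x := Padic (popp_compat x).
Definition pone := Padic pone_compat.
Definition pzero := Padic pzero_compat.

Lemma paddA : associative padd.
Proof. by move=> x y z; apply: padic_eq => n /=; rewrite modzDml modzDmr addrA. Qed.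
Lemma paddC : commutative padd.
Proof. by move=> x y; apply: padic_eq => n /=; rewrite addrC. Qed.
Lemma padd0 : left_id pzero padd.
Proof. by move=> x; apply: padic_eq => n /=; rewrite add0r pnorm. Qed.
Lemma paddN : left_inverse pzero popp padd.
Proof. by move=> x; apply: padic_eq => n /=; rewrite modzDml addNr mod0z. Qed.

HB.instance Definition _ := GRing.isZmodule.Build padic paddA paddC padd0 paddN.

Lemma pmulA : associative pmul.
Proof. by move=> x y z; apply: padic_eq => n /=; rewrite modzMml modzMmr mulrA. Qed.
Lemma pmulC : commutative pmul.
Proof. by move=> x y; apply: padic_eq => n /=; rewrite mulrC. Qed.
Lemma pmul1 : left_id pone pmul.
Proof. by move=> x; apply: padic_eq => n /=; rewrite modzMml mul1r pnorm. Qed.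
Lemma pmulD : left_distributive pmul padd.
Proof. by move=> x y z; apply: padic_eq => n /=; rewrite modzMml modzDm mulrDl. Qed.
Lemma pone_neq0 : pone != pzero.
Proof.
apply/eqP => /(congr1 (fun x => pval x 1)) /=.
rewrite /padic_mod expr1 modz_small //; lia.
Qed.

HB.instance Definition _ :=
  GRing.Zmodule_isComNzRing.Build padic pmulA pmulC pmul1 pmulD pone_neq0.

End Padic.

(* The p-adic integers Z_p, p = q.+2 (constructed above as compatible  *)
(* sequences x_n in [0, p^n) with x_n = x_{n+1} mod p^n), the concrete *)
(* rings Z_2, Z_3, Z_5 and Z_5[sqrt 5] = Z_5 + Z_5 sqrt 5.              *)

Definition Z_2 := padic 0.
Definition Z_3 := padic 1.
Definition Z_5 := padic 3.

Definition padic_res (q : nat) (x : padic q) : 'F_(q.+2) := (pval x 1)%:~R.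

Record Z5sqrt5 := Z5s { zre : Z_5; zim : Z_5 }.  (* zre + zim * sqrt 5 *)

HB.instance Definition _ := gen_eqMixin Z5sqrt5.
HB.instance Definition _ := gen_choiceMixin Z5sqrt5.

Lemma Z5s_eq (x y : Z5sqrt5) : zre x = zre y -> zim x = zim y -> x = y.
Proof. by case: x => a b; case: y => c d /= -> ->. Qed.

Definition z5add x y := Z5s (zre x + zre y) (zim x + zim y).
Definition z5opp x := Z5s (- zre x) (- zim x).
Definition z5zero := Z5s 0 0.
Definition z5one := Z5s 1 0.
(* (a + b sqrt5)(c + d sqrt5) = (ac + 5bd) + (ad + bc) sqrt5 *)
Definition z5mul x y :=
  Z5s (zre x * zre y + 5%:R * (zim x * zim y)) (zre x * zim y + zim x * zre y).

Lemma z5addA : associative z5add.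
Proof. by move=> x y z; apply: Z5s_eq => /=; rewrite addrA. Qed.
Lemma z5addC : commutative z5add.
Proof. by move=> x y; apply: Z5s_eq => /=; rewrite addrC. Qed.
Lemma z5add0 : left_id z5zero z5add.
Proof. by move=> x; apply: Z5s_eq => /=; rewrite add0r. Qed.
Lemma z5addN : left_inverse z5zero z5opp z5add.
Proof. by move=> x; apply: Z5s_eq => /=; rewrite addNr. Qed.

HB.instance Definition _ :=
  GRing.isZmodule.Build Z5sqrt5 z5addA z5addC z5add0 z5addN.

Lemma z5mulA : associative z5mul.
Proof. by move=> x y z; apply: Z5s_eq => /=; ring. Qed.
Lemma z5mulC : commutative z5mul.
Proof. by move=> x y; apply: Z5s_eq => /=; ring. Qed.
Lemma z5mul1 : left_id z5one z5mul.
Proof. by move=> x; apply: Z5s_eq => /=; ring. Qed.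
Lemma z5mulD : left_distributive z5mul z5add.
Proof. by move=> x y z; apply: Z5s_eq => /=; ring. Qed.
Lemma z5one_neq0 : z5one != z5zero.
Proof. by apply/eqP => /(congr1 zre) /= /eqP; rewrite oner_eq0. Qed.

HB.instance Definition _ :=
  GRing.Zmodule_isComNzRing.Build Z5sqrt5 z5mulA z5mulC z5mul1 z5mulD z5one_neq0.

Definition Z5s_res (x : Z5sqrt5) : 'F_5 := padic_res (zre x).

(* The category C^ of complete noetherian local rings with residue     *)
(* field k = 'F_p.  An object is a commutative ring R together with a  *)
(* surjective ring morphism res : R -> 'F_p whose kernel is the        *)
(* maximal ideal m_R (R local), R noetherian, m_R-adically complete    *)
(* and separated.                                                      *)

Section Chat.
Variable p : nat.

Definition ring_hom (A B : comNzRingType) (f : A -> B) : Prop :=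
  f 1 = 1 /\ (forall x y, f (x + y) = f x + f y) /\ (forall x y, f (x * y) = f x * f y).

Definition is_ideal (R : comNzRingType) (I : R -> Prop) : Prop :=
  I 0 /\ (forall x y, I x -> I y -> I (x + y)) /\ (forall r x, I x -> I (r * x)).

Definition fin_gen_ideal (R : comNzRingType) (I : R -> Prop) : Prop :=
  exists s : seq R, forall x, I x <->
    exists c : 'I_(size s) -> R, x = \sum_(i < size s) c i * s`_i.

Definition noetherian (R : comNzRingType) : Prop :=
  forall I : R -> Prop, is_ideal I -> fin_gen_ideal I.

(* x \in m^n, where m = ker res : m^0 = R, m^(n+1) = m * m^n *)
Fixpoint mpow (R : comNzRingType) (res : R -> 'F_p) (n : nat) (x : R) : Prop :=
  match n with
  | 0 => True
  | n'.+1 => exists s : seq (R * R),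
      (forall ab, ab \in s -> res ab.1 = 0 /\ mpow res n' ab.2) /\
      x = \sum_(ab <- s) ab.1 * ab.2
  end.

Definition madic_separated (R : comNzRingType) (res : R -> 'F_p) : Prop :=
  forall x, (forall n, mpow res n x) -> x = 0.

Definition madic_complete (R : comNzRingType) (res : R -> 'F_p) : Prop :=
  forall x : nat -> R, (forall n, mpow res n (x n.+1 - x n)) ->
    exists l, forall n, mpow res n (l - x n).

Definition CObj (R : comNzRingType) (res : R -> 'F_p) : Prop :=
  [/\ ring_hom res, (forall y, exists x, res x = y),
      (forall x, res x != 0 -> exists y, x * y = 1),
      noetherian R & madic_separated res /\ madic_complete res].

(* morphisms of C^ : ring morphisms inducing the identity on k
   (such morphisms are automatically local) *)
Definition CHom (R S : comNzRingType) (resR : R -> 'F_p) (resS : S -> 'F_p)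
  (f : R -> S) : Prop := ring_hom f /\ forall x, resS (f x) = resR x.

(* A map SL_2(R0) -> GL_2(S) is represented by a function              *)
(* 'M[R0]_2 -> 'M[S]_2 of which only the values on SL_2(R0) matter.    *)
(* SL_2(R0) carries its profinite topology, i.e. the m_R0-adic one     *)
(* (basis of neighbourhoods of g : g + M_2(m_R0^N)), and GL_2(S) the   *)
(* m_S-adic one.                                                       *)

Definition inSL2 (R : comNzRingType) (g : 'M[R]_2) : Prop := \det g = 1.

Definition mx_cong (R : comNzRingType) (res : R -> 'F_p) (n : nat)
  (A B : 'M[R]_2) : Prop := forall i j, mpow res n (A i j - B i j).

Definition mx_invertible (S : comNzRingType) (A : 'M[S]_2) : Prop :=
  exists B : 'M[S]_2, A *m B = 1%:M /\ B *m A = 1%:M.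

Definition continuous_SL2 (R0 S : comNzRingType) (res0 : R0 -> 'F_p)
  (resS : S -> 'F_p) (rho : 'M[R0]_2 -> 'M[S]_2) : Prop :=
  forall g, inSL2 g -> forall n, exists N, forall h, inSL2 h ->
    mx_cong res0 N h g -> mx_cong resS n (rho h) (rho g).

Definition is_lift (R0 S : comNzRingType) (res0 : R0 -> 'F_p)
  (resS : S -> 'F_p) (rho : 'M[R0]_2 -> 'M[S]_2) : Prop :=
  [/\ forall g h, inSL2 g -> inSL2 h -> rho (g *m h) = rho g *m rho h,
      forall g, inSL2 g -> mx_invertible (rho g),
      continuous_SL2 res0 resS rho &
      forall g, inSL2 g -> map_mx resS (rho g) = map_mx res0 g].

(* strict equivalence: conjugation by an element of I + M_2(m_S) *)
Definition strictly_equiv (R0 S : comNzRingType) (resS : S -> 'F_p)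
  (rho1 rho2 : 'M[R0]_2 -> 'M[S]_2) : Prop :=
  exists C D : 'M[S]_2,
    [/\ C *m D = 1%:M, D *m C = 1%:M, map_mx resS C = 1%:M &
        forall g, inSL2 g -> rho2 g = C *m rho1 g *m D].

(* A lift rho of rhobar to R (in C^) is universal iff for every S in C^
   the map Hom_C^(R, S) -> Def(S), f |-> [GL_2(f) o rho], is bijective. *)
Definition universal_lift (R0 R : comNzRingType) (res0 : R0 -> 'F_p)
  (resR : R -> 'F_p) (rho : 'M[R0]_2 -> 'M[R]_2) : Prop :=
  forall (S : comNzRingType) (resS : S -> 'F_p), CObj resS ->
    (forall rho' : 'M[R0]_2 -> 'M[S]_2, is_lift res0 resS rho' ->
       exists f : R -> S, CHom resR resS f /\
         strictly_equiv resS (fun g => map_mx f (rho g)) rho') /\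
    (forall f f' : R -> S, CHom resR resS f -> CHom resR resS f' ->
       strictly_equiv resS (fun g => map_mx f (rho g)) (fun g => map_mx f' (rho g)) ->
       f =1 f').

End Chat.

From HB Require Import structures.
From mathcomp Require Import all_boot all_order all_algebra.
From mathcomp Require Import boolp.
From mathcomp Require Import ring zify.
Set Implicit Arguments. Unset Strict Implicit. Unset Printing Implicit Defensive.
Import Order.TTheory GRing.Theory Num.Theory.
Local Open Scope ring_scope.

(* For k = F_p and W = Z_2, Z_3, Z_5[sqrt 5], the reduction GL_2(W) -> GL_2(F_p)
   has a multiplicative section over SL_2(F_p).  It is given by an explicit
   finite table whose multiplication and reduction are checked by computation;
   over Z_3 and Z_5[sqrt 5] it uses square roots of -2 and -1 obtained by
   Hensel's lemma.  Composed with the reduction SL_2(R) -> SL_2(F_p) it is a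
   lift of rhobar to W, an object of C^ as a complete discrete valuation ring;
   this gives (i).  The lift is trivial on the congruence element
   [[1, p], [0, 1]].  If the inclusion were universal, the lift would be
   strictly equivalent to the inclusion pushed forward along some morphism
   f : R -> W, so f would send [[1, p], [0, 1]] to the identity, i.e.
   p = f p = 0 in W, which is false. *)

Section RingHom.
Variables (A B : comNzRingType) (f : A -> B).
Hypothesis fh : ring_hom f.

Lemma ring_hom1 : f 1 = 1. Proof. by case: fh. Qed.
Lemma ring_homD x y : f (x + y) = f x + f y. Proof. by case: fh => _ []. Qed.
Lemma ring_homM x y : f (x * y) = f x * f y. Proof. by case: fh => _ []. Qed.

Lemma ring_hom0 : f 0 = 0.
Proof. by apply: (addrI (f 0)); rewrite -ring_homD !addr0. Qed.

Lemma ring_homN x : f (- x) = - f x.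
Proof. by apply/eqP; rewrite -subr_eq0 opprK -ring_homD addNr ring_hom0. Qed.

Lemma ring_homB x y : f (x - y) = f x - f y.
Proof. by rewrite ring_homD ring_homN. Qed.

Lemma ring_hom_nat n : f n%:R = n%:R.
Proof. by elim: n => [|n IH]; rewrite ?ring_hom0 // -addn1 !natrD ring_homD IH ring_hom1. Qed.

Lemma ring_hom_int z : f z%:~R = z%:~R.
Proof. by case: z => n; rewrite ?NegzE ?mulrNz ?ring_homN ring_hom_nat. Qed.

Lemma ring_hom_sum I (r : seq I) (P : pred I) (F : I -> A) :
  f (\sum_(i <- r | P i) F i) = \sum_(i <- r | P i) f (F i).
Proof. exact: (big_morph f ring_homD ring_hom0). Qed.

End RingHom.

Definition mx22 (R : Type) (a b c d : R) : 'M[R]_2 :=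
  \matrix_(i < 2, j < 2) if i == 0 then (if j == 0 then a else b)
                                   else (if j == 0 then c else d).

Lemma mx22_eta (R : Type) (M : 'M[R]_2) : M = mx22 (M 0 0) (M 0 1) (M 1 0) (M 1 1).
Proof.
apply/matrixP => i j; rewrite mxE.
by case: i => [[|[|//]] Hi]; case: j => [[|[|//]] Hj]; congr (M _ _); apply: val_inj.
Qed.

Lemma mx22E (R : Type) (a b c d : R) :
  [/\ mx22 a b c d 0 0 = a, mx22 a b c d 0 1 = b, mx22 a b c d 1 0 = c &
      mx22 a b c d 1 1 = d].
Proof. by rewrite !mxE. Qed.

Lemma mx22_inj (R : Type) (a b c d a' b' c' d' : R) :
  mx22 a b c d = mx22 a' b' c' d' -> [/\ a = a', b = b', c = c' & d = d'].
Proof.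
move=> E; have := congr1 (fun M : 'M[R]_2 => (M 0 0, M 0 1, M 1 0, M 1 1)) E.
by rewrite !mxE /= => -[].
Qed.

Lemma map_mx22 (R S : Type) (f : R -> S) a b c d :
  map_mx f (mx22 a b c d) = mx22 (f a) (f b) (f c) (f d).
Proof.
apply/matrixP => i j; rewrite !mxE.
by case: i => [[|[|//]] Hi]; case: j => [[|[|//]] Hj].
Qed.

Section Mx22Ring.
Variable R : comNzRingType.

Lemma mulmx22 (a b c d e f g h : R) :
  mx22 a b c d *m mx22 e f g h =
  mx22 (a * e + b * g) (a * f + b * h) (c * e + d * g) (c * f + d * h).
Proof.
apply/matrixP => i j; rewrite !mxE !big_ord_recl big_ord0 addr0 !mxE /=.
by case: i => [[|[|//]] Hi]; case: j => [[|[|//]] Hj].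
Qed.

Lemma det_mx22 (a b c d : R) : \det (mx22 a b c d) = a * d - b * c.
Proof.
have det11 (M : 'M[R]_1) : \det M = M 0 0 by rewrite {1}[M]mx11_scalar det_scalar1.
rewrite (expand_det_row _ 0) !big_ord_recl big_ord0 addr0 /cofactor !det11 !mxE /=.
by rewrite /bump /= expr0 expr1; ring.
Qed.

Lemma scale_mx22 (k a b c d : R) :
  k *: mx22 a b c d = mx22 (k * a) (k * b) (k * c) (k * d).
Proof.
apply/matrixP => i j; rewrite !mxE.
by case: i => [[|[|//]] Hi]; case: j => [[|[|//]] Hj].
Qed.

Lemma mx22_1 : (1%:M : 'M[R]_2) = mx22 1 0 0 1.
Proof.
apply/matrixP => i j; rewrite !mxE.
by case: i => [[|[|//]] Hi]; case: j => [[|[|//]] Hj].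
Qed.

End Mx22Ring.

Section MapMx22.
Variables (A B : comNzRingType) (f : A -> B).
Hypothesis fh : ring_hom f.

Lemma map_mxM_ring_hom (M N : 'M[A]_2) : map_mx f (M *m N) = map_mx f M *m map_mx f N.
Proof.
by rewrite [M]mx22_eta [N]mx22_eta mulmx22 !map_mx22 mulmx22 !(ring_homD fh, ring_homM fh).
Qed.

Lemma det_map_mx_ring_hom (M : 'M[A]_2) : \det (map_mx f M) = f (\det M).
Proof. by rewrite [M]mx22_eta map_mx22 !det_mx22 (ring_homB fh) !(ring_homM fh). Qed.

Lemma map_mx1_ring_hom : map_mx f (1%:M : 'M[A]_2) = 1%:M.
Proof. by rewrite !mx22_1 map_mx22 (ring_hom1 fh) (ring_hom0 fh). Qed.

End MapMx22.

Lemma mpow0 (p : nat) (R : comNzRingType) (res : R -> 'F_p) n : mpow res n 0.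
Proof. by case: n => //= n; exists [::]; split => //; rewrite big_nil. Qed.

Lemma mpow1_res (p : nat) (R : comNzRingType) (res : R -> 'F_p) :
  ring_hom res -> forall x, mpow res 1 x -> res x = 0.
Proof.
move=> rh x [s [H ->]]; rewrite (ring_hom_sum rh) big1_seq // => ab /H [h _].
by rewrite (ring_homM rh) h mul0r.
Qed.

Section Uniformizer.
Variables (p : nat) (R : comNzRingType) (res : R -> 'F_p) (pi : R).
Hypotheses (res_hom : ring_hom res) (res_surj : forall y, exists x, res x = y)
  (res_unit : forall x, res x != 0 -> exists y, x * y = 1)
  (res_eq0 : forall x, res x = 0 <-> exists c, x = pi * c)
  (pi_sep : forall x, (forall n, exists w, x = pi ^+ n * w) -> x = 0)
  (pi_complete : forall x : nat -> R,
     (forall n, exists w, x n.+1 - x n = pi ^+ n * w) ->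
     exists l, forall n, exists w, l - x n = pi ^+ n * w).

Lemma mpow_uniformizer n x : mpow res n x <-> exists w, x = pi ^+ n * w.
Proof.
elim: n x => [|n IHn] x /=.
  by split=> // _; exists x; rewrite expr0 mul1r.
split; last first.
  case=> w ->; exists [:: (pi, pi ^+ n * w)]; split; last by rewrite big_seq1 exprS mulrA.
  move=> ab; rewrite inE => /eqP -> /=; split; last by apply/IHn; exists w.
  by apply/res_eq0; exists 1; rewrite mulr1.
case=> s [H ->]; elim: s H => [|ab s IH] H; first by exists 0; rewrite big_nil mulr0.
rewrite big_cons.
have [H1 H2] := H ab (mem_head _ _).
have [c ->] := (res_eq0 _).1 H1.
have [w Hw] := (IHn _).1 H2.
have [w' ->] : exists w, \sum_(ab <- s) ab.1 * ab.2 = pi ^+ n.+1 * w.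
  by apply: IH => ab' h; apply: H; rewrite inE h orbT.
by exists (c * w + w'); rewrite Hw exprS; ring.
Qed.

(* A nonzero ideal is generated by [pi ^+ v], for the least [v] such that
   the ideal is not contained in [pi ^+ v.+1 R]. *)
Lemma noetherian_uniformizer : noetherian R.
Proof.
move=> I [I0 [ID IM]].
have [[x0 [Ix0 nx0]] | I_eq0] := pselect (exists x, I x /\ x <> 0); last first.
  exists [::] => x; split; last by case=> c ->; rewrite big_ord0.
  move=> Ix; exists (fun _ => 0); rewrite big_ord0.
  by apply: contrapT => nx; apply: I_eq0; exists x.
have /ex_minnP [n /asboolP [x1 [Ix1 Hx1]] n_min] :
    exists n, `[< exists x, I x /\ ~ exists w, x = pi ^+ n * w >].
  apply: contrapT => /forallNP allI; apply: nx0; apply: pi_sep => n.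
  by apply: contrapT => nd; apply: (allI n); apply/asboolP; exists x0.
case: n Hx1 n_min => [|v] Hx1 n_min.
  by case: Hx1; exists x1; rewrite expr0 mul1r.
have I_sub x : I x -> exists w, x = pi ^+ v * w.
  move=> Ix; apply: contrapT => nd.
  have /n_min : `[< exists x, I x /\ ~ exists w, x = pi ^+ v * w >].
    by apply/asboolP; exists x.
  by rewrite ltnn.
have [u x1E] := I_sub x1 Ix1.
have [u' uu'] : exists u', u * u' = 1.
  apply: res_unit; apply/eqP => /res_eq0 [c uE]; apply: Hx1; exists c.
  by rewrite x1E uE exprSr mulrA.
have Ipv : I (pi ^+ v).
  suff -> : pi ^+ v = u' * x1 by exact: IM.
  by rewrite x1E mulrCA (mulrC u') uu' mulr1.
exists [:: pi ^+ v] => x; split.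
  by move=> /I_sub [w ->]; exists (fun _ => w); rewrite big_ord1 /= mulrC.
by case=> c ->; rewrite big_ord1 /=; exact: IM.
Qed.

Lemma CObj_uniformizer : CObj res.
Proof.
split=> //; first exact: noetherian_uniformizer.
split=> [x H|x H]; first by apply: pi_sep => n; apply/mpow_uniformizer.
have [l Hl] := pi_complete (fun n => (mpow_uniformizer _ _).1 (H n)).
by exists l => n; apply/mpow_uniformizer.
Qed.

End Uniformizer.

Lemma cauchy_telescope (R : comNzRingType) (pi : R) (x : nat -> R) :
  (forall n, exists w, x n.+1 - x n = pi ^+ n * w) ->
  forall n m, exists w, x (n + m)%N - x n = pi ^+ n * w.
Proof.
move=> H n; elim=> [|m [w IH]]; first by exists 0; rewrite addn0 subrr mulr0.
have [w' Hw'] := H (n + m)%N.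
exists (pi ^+ m * w' + w).
have -> : x (n + m.+1)%N - x n = (x (n + m).+1 - x (n + m)%N) + (x (n + m)%N - x n).
  by rewrite addnS; ring.
by rewrite Hw' IH exprD; ring.
Qed.

Lemma modz_inv_uniq (a y y' d : int) : modz (a * y) d = modz 1 d ->
  modz (a * y') d = modz 1 d -> modz y d = modz y' d.
Proof.
move=> h h'.
have -> : modz y d = modz (y * modz (a * y') d) d by rewrite h' modzMmr mulr1.
have e : y * (a * y') = (a * y) * y' by ring.
by rewrite modzMmr e -modzMml h modzMml mul1r.
Qed.

Lemma Fp_intr_mod p (pr : prime p) (z : int) : ((modz z p)%:~R : 'F_p) = z%:~R.
Proof.
apply/eqP; rewrite eq_sym -subr_eq0 -intrB.
have -> : z - modz z p = (z %/ p)%Z * p by rewrite /modz; ring.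
by rewrite intrM -pmulrn pchar_Fp_0 // mulr0.
Qed.

Section Zp.
Variable q : nat.
Hypothesis pr : prime q.+2.
Local Notation p := q.+2.
Local Notation pm := (padic_mod q).
Local Notation Zp := (padic q).

Lemma pvalD (x y : Zp) n : pval (x + y) n = modz (pval x n + pval y n) (pm n).
Proof. by []. Qed.
Lemma pvalM (x y : Zp) n : pval (x * y) n = modz (pval x n * pval y n) (pm n).
Proof. by []. Qed.
Lemma pvalN (x : Zp) n : pval (- x) n = modz (- pval x n) (pm n).
Proof. by []. Qed.
Lemma pval1 n : pval (1 : Zp) n = modz 1 (pm n).
Proof. by []. Qed.
Lemma pval0 n : pval (0 : Zp) n = 0.
Proof. by []. Qed.
Lemma pvalB (x y : Zp) n : pval (x - y) n = modz (pval x n - pval y n) (pm n).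
Proof. by rewrite pvalD pvalN modzDmr. Qed.

Lemma padic_modE n : pm n = (p ^ n)%N%:Z.
Proof. by rewrite /padic_mod; elim: n => // n IH; rewrite exprS IH expnS PoszM. Qed.
Lemma padic_mod_gt0 n : 0 < pm n.
Proof. by rewrite padic_modE ltz_nat expn_gt0. Qed.
Lemma padic_mod_neq0 n : pm n != 0.
Proof. by rewrite gt_eqF // padic_mod_gt0. Qed.
Lemma padic_mod1 : pm 1 = p%:Z.
Proof. by rewrite /padic_mod expr1. Qed.

Lemma pval_ge0 (x : Zp) n : 0 <= pval x n.
Proof. by rewrite -pnorm modz_ge0 // padic_mod_neq0. Qed.
Lemma pval_lt (x : Zp) n : pval x n < pm n.
Proof. by rewrite -pnorm ltz_pmod // padic_mod_gt0. Qed.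

Lemma modz_padic_mod a m k : (m <= k)%N -> modz (modz a (pm k)) (pm m) = modz a (pm m).
Proof.
move=> mk; have -> : pm k = pm m * pm (k - m) by rewrite /padic_mod -exprD subnKC.
exact: modz_dvdl.
Qed.

Lemma pval_mod (x : Zp) m k : (m <= k)%N -> pval x m = modz (pval x k) (pm m).
Proof.
move=> mk; rewrite -(subnKC mk); elim: (k - m)%N => [|j IH]; first by rewrite addn0 pnorm.
by rewrite IH addnS (pvalP x (m + j)%N) modz_padic_mod // leq_addr.
Qed.

Lemma pval_nat (m : nat) n : pval (m%:R : Zp) n = modz m (pm n).
Proof.
elim: m => [|m IH]; first by rewrite pval0 mod0z.
by rewrite -addn1 natrD pvalD IH pval1 modzDm PoszD.
Qed.

Lemma pval_intr (z : int) n : pval (z%:~R : Zp) n = modz z (pm n).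
Proof.
case: z => m; first by rewrite -pmulrn pval_nat.
by rewrite NegzE mulrNz pvalN -pmulrn pval_nat modzNm.
Qed.

Lemma padic_natr_neq0 : (p%:R : Zp) != 0.
Proof.
apply/eqP => /(congr1 (fun x => pval x 2)); rewrite pval_nat padic_modE modz_small //.
by rewrite ltz_nat -[X in (X < _)%N]expn1 ltn_exp2l.
Qed.

Definition padic_pi : Zp := p%:R.

Lemma padic_piX n : padic_pi ^+ n = (pm n)%:~R.
Proof. by rewrite /padic_pi padic_modE -pmulrn natrX. Qed.

Lemma pval_piX_mul n (w : Zp) k :
  pval (padic_pi ^+ n * w) k = modz (pm n * pval w k) (pm k).
Proof. by rewrite pvalM padic_piX pval_intr modzMml. Qed.

(* Dividing the digits [x_(n+k)] by [p^n] gives the digits of [x / p^n]. *)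
Lemma padic_dvdP n (x : Zp) : (exists w, x = padic_pi ^+ n * w) <-> pval x n = 0.
Proof.
split=> [[w ->]|x0]; first by rewrite pval_piX_mul modzMr.
have dv k : (pm n %| pval x (n + k)%N)%Z.
  by apply/dvdz_mod0P; rewrite -pval_mod ?leq_addr.
pose y k := divz (pval x (n + k)%N) (pm n).
have yE k : pm n * y k = pval x (n + k)%N by rewrite mulrC divzK.
have yc : padic_compat q y.
  move=> k; rewrite /y (pvalP x (n + k)%N) -addnS -(yE k.+1).
  have -> : pm (n + k)%N = pm n * pm k by rewrite /padic_mod exprD.
  by rewrite -mulz_modr ?padic_mod_gt0 // !mulKz ?padic_mod_neq0.
by exists (Padic yc); apply: padic_eq => k; rewrite pval_piX_mul /= yE -pval_mod ?leq_addl.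
Qed.

Lemma padic_res_hom : ring_hom (@padic_res q).
Proof.
rewrite /padic_res; split; first by rewrite pval1 padic_mod1 modz_small //; lia.
by split=> x y; rewrite ?pvalD ?pvalM padic_mod1 Fp_intr_mod // ?intrD ?intrM.
Qed.

Lemma padic_res_eq0 (x : Zp) : padic_res x = 0 <-> pval x 1 = 0.
Proof.
rewrite /padic_res; split=> [|->] //.
have := pval_ge0 x 1; have := pval_lt x 1; rewrite padic_mod1.
case: (pval x 1) => // m; rewrite ltz_nat => lt_mp _; rewrite -pmulrn => /eqP.
rewrite -(dvdn_pcharf (pchar_Fp pr)) => /dvdn_leq; lia.
Qed.

Lemma padic_res_surj y : exists x : Zp, padic_res x = y.
Proof.
exists ((val y)%:R); rewrite /padic_res pval_nat padic_mod1 Fp_intr_mod // -pmulrn.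
exact: natr_Zp.
Qed.

(* The inverse is assembled from Bezout inverses of the digits [x_n] modulo [p^n]. *)
Lemma padic_unit (x : Zp) : padic_res x != 0 -> exists y, x * y = 1.
Proof.
move=> nx.
have x1 : pval x 1 != 0 by apply: contra nx => /eqP /padic_res_eq0 ->.
have cop n : coprimez (pval x n) (pm n).
  case: n => [|n]; first by rewrite /coprimez /padic_mod expr0 gcdz1.
  rewrite /padic_mod; apply: coprimezXr.
  rewrite coprimezE /= coprime_sym prime_coprime //; apply: contra x1 => dv.
  rewrite (pval_mod x (leq_addl n 1)) padic_mod1 addn1.
  by apply/eqP/dvdz_mod0P; rewrite dvdzE.
pose u n := projT1 (Bezoutz (pval x n) (pm n)).
have uE n : modz (pval x n * u n) (pm n) = modz 1 (pm n).
  rewrite /u; case: (Bezoutz _ _) => /= un [v hv].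
  move: (cop n); rewrite /coprimez => /eqP g1; rewrite g1 in hv.
  by rewrite -hv mulrC -modzDmr modzMl addr0.
pose y n := modz (u n) (pm n).
have yc : padic_compat q y.
  move=> n; rewrite /y modz_padic_mod //; apply: (@modz_inv_uniq (pval x n)) => //.
  rewrite (pval_mod x (leqnSn n)) modzMml.
  by rewrite -(modz_padic_mod _ (leqnSn n)) uE modz_padic_mod.
by exists (Padic yc); apply: padic_eq => n; rewrite pvalM /= /y modzMmr uE.
Qed.

Lemma padic_sep (x : Zp) : (forall n, exists w, x = padic_pi ^+ n * w) -> x = 0.
Proof. by move=> H; apply: padic_eq => n; rewrite pval0; apply/padic_dvdP. Qed.

(* The limit has digits [l_n = (x n)_n]. *)
Lemma padic_complete (x : nat -> Zp) :
  (forall n, exists w, x n.+1 - x n = padic_pi ^+ n * w) ->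
  exists l, forall n, exists w, l - x n = padic_pi ^+ n * w.
Proof.
move=> H.
have E n : pval (x n.+1) n = pval (x n) n.
  have /padic_dvdP := H n; rewrite pvalB => /dvdz_mod0P.
  by rewrite -eqz_mod_dvd !pnorm => /eqP.
pose l n := pval (x n) n.
have lc : padic_compat q l by move=> n; rewrite /l -(pvalP (x n.+1) n) E.
by exists (Padic lc) => n; apply/padic_dvdP; rewrite pvalB /= subrr mod0z.
Qed.

Lemma padic_res_eq0P (x : Zp) : padic_res x = 0 <-> exists c, x = padic_pi * c.
Proof.
rewrite padic_res_eq0 -(padic_dvdP 1).
by split; case=> c ->; exists c; rewrite expr1.
Qed.

Lemma padic_CObj : CObj (@padic_res q).
Proof.
apply: (CObj_uniformizer (pi := padic_pi)).
- exact: padic_res_hom.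
- exact: padic_res_surj.
- exact: padic_unit.
- exact: padic_res_eq0P.
- exact: padic_sep.
- exact: padic_complete.
Qed.

End Zp.

Definition sqrt5 : Z5sqrt5 := Z5s 0 1.

Lemma zreM (x y : Z5sqrt5) : zre (x * y) = zre x * zre y + 5%:R * (zim x * zim y).
Proof. by []. Qed.
Lemma zimM (x y : Z5sqrt5) : zim (x * y) = zre x * zim y + zim x * zre y.
Proof. by []. Qed.

Lemma Z5s_natr n : (n%:R : Z5sqrt5) = Z5s n%:R 0.
Proof.
elim: n => [|n IH]; first by apply: Z5s_eq.
by rewrite -addn1 natrD IH; apply: Z5s_eq; rewrite /= ?natrD ?addr0.
Qed.

Lemma Z5s_mulr a w : Z5s a 0 * w = Z5s (a * zre w) (a * zim w).
Proof. by apply: Z5s_eq; rewrite ?zreM ?zimM /=; ring. Qed.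

Lemma sqrt5_expr2 : sqrt5 ^+ 2 = Z5s (padic_pi 3) 0.
Proof. by apply: Z5s_eq; rewrite expr2 ?zreM ?zimM /= /padic_pi; ring. Qed.

Lemma sqrt5_exprM2 k : sqrt5 ^+ (2 * k) = Z5s (padic_pi 3 ^+ k) 0.
Proof.
elim: k => [|k IH]; first by rewrite muln0 expr0.
rewrite mulnS exprD IH sqrt5_expr2 Z5s_mulr.
by apply: Z5s_eq; rewrite /= ?exprS ?mulr0.
Qed.

Lemma padic_res5 : padic_res (5%:R : Z_5) = 0.
Proof. by rewrite (ring_hom_nat (padic_res_hom (isT : prime 5))); apply: pchar_Fp_0. Qed.

Lemma Z5s_res_hom : ring_hom Z5s_res.
Proof.
have h := padic_res_hom (isT : prime 5).
rewrite /Z5s_res; split; first exact: (ring_hom1 h).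
split=> x y; first by rewrite /= (ring_homD h).
by rewrite zreM (ring_homD h) !(ring_homM h) padic_res5 mul0r addr0.
Qed.

(* [a + b sqrt5] is inverted through its norm [a^2 - 5 b^2], a unit of [Z_5]. *)
Lemma Z5s_unit x : Z5s_res x != 0 -> exists y, x * y = 1.
Proof.
have h := padic_res_hom (isT : prime 5).
case: x => a b; rewrite /Z5s_res /= => na.
pose N := a * a - 5%:R * (b * b).
have nN : padic_res N != 0.
  by rewrite /N (ring_homB h) !(ring_homM h) padic_res5 mul0r subr0 mulf_neq0.
have [Ni hN] := padic_unit (isT : prime 5) nN.
exists (Z5s (a * Ni) (- b * Ni)); apply: Z5s_eq; rewrite ?zreM ?zimM /=; last by ring.
by rewrite -[RHS]hN /N; ring.
Qed.

Lemma Z5s_res_eq0P x : Z5s_res x = 0 <-> exists c, x = sqrt5 * c.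
Proof.
case: x => a b; rewrite /Z5s_res /=; split.
  move/(padic_res_eq0P (isT : prime 5)) => [a' ->]; exists (Z5s b a').
  by apply: Z5s_eq; rewrite ?zreM ?zimM /= /padic_pi; ring.
case=> c e; have -> : a = zre (sqrt5 * c) by rewrite -e.
by rewrite zreM /= mul0r add0r (ring_homM (padic_res_hom _)) ?padic_res5 ?mul0r.
Qed.

Lemma Z5s_sep x : (forall n, exists w, x = sqrt5 ^+ n * w) -> x = 0.
Proof.
move=> H.
have H2 k : exists w, x = Z5s (padic_pi 3 ^+ k * zre w) (padic_pi 3 ^+ k * zim w).
  by have [w ->] := H (2 * k)%N; exists w; rewrite sqrt5_exprM2 Z5s_mulr.
by apply: Z5s_eq; apply: padic_sep => k; have [w ->] := H2 k; eexists.
Qed.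

(* Along even indices both coordinates are 5-adic Cauchy sequences. *)
Lemma Z5s_complete (x : nat -> Z5sqrt5) :
  (forall n, exists w, x n.+1 - x n = sqrt5 ^+ n * w) ->
  exists l, forall n, exists w, l - x n = sqrt5 ^+ n * w.
Proof.
move=> /cauchy_telescope tele.
have step k : exists w, x (2 * k.+1)%N - x (2 * k)%N =
    Z5s (padic_pi 3 ^+ k * zre w) (padic_pi 3 ^+ k * zim w).
  by have [w Hw] := tele (2 * k)%N 2%N; exists w; rewrite mulnS addnC Hw sqrt5_exprM2 Z5s_mulr.
have [la Hla] : exists la, forall n, exists w, la - zre (x (2 * n)%N) = padic_pi 3 ^+ n * w.
  by apply: padic_complete => k; have [w Hw] := step k; exists (zre w); exact: (congr1 zre Hw).
have [lb Hlb] : exists lb, forall n, exists w, lb - zim (x (2 * n)%N) = padic_pi 3 ^+ n * w.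
  by apply: padic_complete => k; have [w Hw] := step k; exists (zim w); exact: (congr1 zim Hw).
exists (Z5s la lb) => n.
have [u Hu] := Hla n; have [v Hv] := Hlb n; have [w Hw] := tele n n.
exists (sqrt5 ^+ n * Z5s u v + w).
have -> : Z5s la lb - x n = (Z5s la lb - x (2 * n)%N) + (x (n + n)%N - x n).
  by rewrite addnn -mul2n; ring.
have -> : Z5s la lb - x (2 * n)%N = sqrt5 ^+ (2 * n) * Z5s u v.
  by rewrite sqrt5_exprM2 Z5s_mulr; apply: Z5s_eq; rewrite /= -?Hu -?Hv.
by rewrite Hw mul2n -addnn exprD; ring.
Qed.

Lemma Z5s_CObj : CObj Z5s_res.
Proof.
apply: (CObj_uniformizer (pi := sqrt5)).
- exact: Z5s_res_hom.
- by move=> y; have [a <-] := padic_res_surj (isT : prime 5) y; exists (Z5s a 0).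
- exact: Z5s_unit.
- exact: Z5s_res_eq0P.
- exact: Z5s_sep.
- exact: Z5s_complete.
Qed.

Lemma Z5s_natr5_neq0 : (5%:R : Z5sqrt5) != 0.
Proof.
rewrite Z5s_natr; apply/eqP => /(congr1 zre) /= /eqP; apply/negP.
exact: (padic_natr_neq0 3).
Qed.

Section Hensel.
Variable q : nat.
Hypotheses (pr : prime q.+2) (p_gt2 : (2 < q.+2)%N).
Local Notation p := q.+2.
Local Notation pm := (padic_mod q).
Variable a : int.

Definition approx_sqrt n (t : int) := (pm n.+1 %| t ^+ 2 - a)%Z && ~~ (p%:Z %| t)%Z.

Lemma coprimez_p (t : int) : ~~ (p%:Z %| t)%Z -> coprimez t p.
Proof. by move=> h; rewrite coprimezE /= coprime_sym prime_coprime. Qed.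

(* Newton step [t' = t - (t^2 - a) / (2 t)], with [1/(2t)] a Bezout inverse mod [p]. *)
Lemma hensel_step n t : approx_sqrt n t ->
  exists t', (pm n.+1 %| t' - t)%Z && approx_sqrt n.+1 t'.
Proof.
case/andP => /dvdzP [r Er] nt.
have /eqP g1 : coprimez (2 * t) p.
  by rewrite coprimezMl (coprimez_p nt) andbT coprimez_p // dvdzE /= gtnNdvd.
case: (Bezoutz (2 * t) p) => u [v]; rewrite g1 => Euv.
pose P := pm n * p.
have PE : pm n.+1 = P by rewrite /P /padic_mod exprSr.
have PE2 : pm n.+2 = P * p by rewrite /padic_mod exprSr -/(padic_mod q n.+1) PE.
pose c := - (r * u).
have dvP : (pm n.+1 %| c * P)%Z by rewrite PE dvdz_mull // dvdzz.
exists (t + c * P); apply/and3P; split.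
- by rewrite addrAC subrr add0r.
- rewrite PE2; apply/dvdzP; exists (r * v + c ^+ 2 * pm n).
  rewrite PE in Er.
  have E : (t + c * P) ^+ 2 - a - (r * v + c ^+ 2 * pm n) * (P * p)
         = (t ^+ 2 - a - r * P) + r * P * (1 - (u * (2 * t) + v * p)).
    by rewrite /c /P; ring.
  by apply/eqP; rewrite -subr_eq0 E Er Euv !subrr mulr0 addr0.
- apply: contra nt => h.
  have pcP : (p%:Z %| c * P)%Z by rewrite dvdz_mull // /P dvdz_mull // dvdzz.
  by rewrite -(addrK (c * P) t) rpredB.
Qed.

Lemma hensel_sqrt x0 : approx_sqrt 0 x0 ->
  exists s : padic q, s * s = a%:~R /\ padic_res s = x0%:~R.
Proof.
move=> ax0.
have step (nt : nat * int) : exists t', approx_sqrt nt.1 nt.2 ->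
    (pm nt.1.+1 %| t' - nt.2)%Z && approx_sqrt nt.1.+1 t'.
  case: (boolP (approx_sqrt nt.1 nt.2)) => [/hensel_step [t' ?]|_]; first by exists t'.
  by exists 0.
have [next nextP] := choice step.
pose fix t n := if n is m.+1 then next (m, t m) else x0.
have tP n : approx_sqrt n (t n).
  by elim: n => [//|n IH]; case/andP: (nextP (n, t n) IH).
have tS n : (pm n.+1 %| t n.+1 - t n)%Z by case/andP: (nextP (n, t n) (tP n)).
have dvS n : (pm n %| pm n.+1)%Z by rewrite /padic_mod exprSr dvdz_mulr.
pose s n := modz (t n) (pm n).
have sc : padic_compat q s.
  move=> n; rewrite /s modz_padic_mod //; apply/eqP; rewrite eq_sym eqz_mod_dvd.
  exact: dvdz_trans (dvS n) (tS n).
exists (Padic sc); split.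
  apply: padic_eq => n; rewrite pvalM pval_intr /= /s modzMm.
  apply/eqP; rewrite eqz_mod_dvd -expr2.
  by apply: dvdz_trans (dvS n) _; case/andP: (tP n).
rewrite /padic_res /= /s padic_mod1 Fp_intr_mod //.
have /dvdzP [k Ek] := tS 0%N; rewrite /padic_mod expr1 in Ek.
by rewrite -(subrK x0 (t 1%N)) Ek intrD intrM -pmulrn pchar_Fp_0 // mulr0 add0r.
Qed.

End Hensel.

Definition SL2_section (p : nat) (S : comNzRingType) (resS : S -> 'F_p)
    (L : 'M['F_p]_2 -> 'M[S]_2) : Prop :=
  [/\ forall A B, \det A = 1 -> \det B = 1 -> L (A *m B) = L A *m L B,
      L 1%:M = 1%:M &
      forall A, \det A = 1 -> map_mx resS (L A) = A].

Lemma lift_of_SL2_section (p : nat) (S : comNzRingType) (resS : S -> 'F_p) L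
    (R : comNzRingType) (resR : R -> 'F_p) :
  ring_hom resR -> SL2_section resS L -> is_lift resR resS (fun g => L (map_mx resR g)).
Proof.
move=> rh [Lmul L1 Lred].
have det_res g : inSL2 g -> \det (map_mx resR g) = 1.
  by move=> gSL; rewrite (det_map_mx_ring_hom rh) gSL (ring_hom1 rh).
have Lhom g h : inSL2 g -> inSL2 h ->
    L (map_mx resR (g *m h)) = L (map_mx resR g) *m L (map_mx resR h).
  by move=> gSL hSL; rewrite (map_mxM_ring_hom rh) Lmul // det_res.
split=> [//|g gSL|g gSL n|g gSL]; last by rewrite Lred // det_res.
  have adjSL : inSL2 (\adj g).
    by rewrite /inSL2 -(mul1r (\det _)) -gSL -det_mulmx mul_mx_adj gSL det1.
  exists (L (map_mx resR (\adj g))).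
  by rewrite -!Lhom // ?mul_mx_adj ?mul_adj_mx gSL (map_mx1_ring_hom rh) L1.
exists 1%N => h hSL hg.
have -> : map_mx resR h = map_mx resR g.
  apply/matrixP => i j; rewrite !mxE; apply/eqP; rewrite -subr_eq0 -(ring_homB rh).
  by apply/eqP; apply: (mpow1_res rh); apply: hg.
by move=> i j; rewrite subrr; apply: mpow0.
Qed.

Lemma not_universal_of_lift (p : nat) (pr : prime p) (R S : comNzRingType)
    (resR : R -> 'F_p) (resS : S -> 'F_p) (rho : 'M[R]_2 -> 'M[S]_2) :
  CObj resS -> (p%:R : S) != 0 -> is_lift resR resS rho ->
  rho (mx22 1 p%:R 0 1) = rho 1%:M -> ~ universal_lift resR resR (fun g => g).
Proof.
move=> CS pS rho_lift rho_u U.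
have [f [[fh _] [C [D [CD DC _ E]]]]] := (U S resS CS).1 _ rho_lift.
have uSL : inSL2 (mx22 1 p%:R 0 1 : 'M[R]_2) by rewrite /inSL2 det_mx22 mulr1 mulr0 subr0.
have /(congr1 (fun X => D *m X *m C)) : C *m map_mx f (mx22 1 p%:R 0 1) *m D =
    C *m map_mx f 1%:M *m D by rewrite -E // -E ?rho_u // /inSL2 det1.
rewrite !mulmxA DC !mul1mx -!mulmxA DC !mulmx1 (map_mx1_ring_hom fh) mx22_1 map_mx22.
case/(@mx22_inj S) => _ fp _ _.
by move: pS; rewrite -(ring_hom_nat fh) fp eqxx.
Qed.

Lemma SL2_section_not_universal (p : nat) (pr : prime p) (S : comNzRingType)
    (resS : S -> 'F_p) L :
  CObj resS -> (p%:R : S) != 0 -> SL2_section resS L ->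
  forall (R : comNzRingType) (resR : R -> 'F_p), CObj resR ->
  (exists rho, is_lift resR resS rho) /\ ~ universal_lift resR resR (fun g => g).
Proof.
move=> CS pS LS R resR [rh _ _ _ _]; have rho_lift := lift_of_SL2_section rh LS.
split; first by eexists; exact: rho_lift.
apply: (not_universal_of_lift pr CS pS rho_lift).
by rewrite mx22_1 !map_mx22 (ring_hom1 rh) (ring_hom0 rh) (ring_hom_nat rh) pchar_Fp_0.
Qed.

Definition mx_key := (nat * nat * nat * nat)%type.

Fixpoint lookup (T : Type) (k : mx_key) (s : seq (mx_key * T)) : option T :=
  if s is e :: s' then (if e.1 == k then Some e.2 else lookup k s') else None.

(* The table is indexed by the entries of the matrices of [SL_2(F_p)].  Its
   values are matrices over an auxiliary ring [T], mapped to [S] by [phi] and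
   stored multiplied by [scn] to keep them integral; [isc] is the inverse of
   [scn] in [S]. *)
Section TableLift.
Variables (p : nat) (pr : prime p).
Variables (T : eqType) (tadd tmul : T -> T -> T) (tzero : T).
Variables (S : comNzRingType) (resS : S -> 'F_p).
Hypothesis resS_hom : ring_hom resS.
Variable phi : T -> S.
Hypotheses (phiD : forall x y, phi (tadd x y) = phi x + phi y)
           (phiM : forall x y, phi (tmul x y) = phi x * phi y)
           (phi0 : phi tzero = 0).
Variable tres : T -> int.
Hypothesis phi_res : forall t, resS (phi t) = (tres t)%:~R.
Variables (tsc : T) (scn : nat) (isc : S).
Hypotheses (phi_sc : phi tsc = scn%:R) (iscK : isc * scn%:R = 1).
Variable tab : seq (mx_key * (T * T * T * T)).

Definition key_mul (k1 k2 : mx_key) : mx_key :=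
  let: (a, b, c, d) := k1 in let: (e, f, g, h) := k2 in
  (((a * e + b * g) %% p)%N, ((a * f + b * h) %% p)%N,
   ((c * e + d * g) %% p)%N, ((c * f + d * h) %% p)%N).

Definition key_det1 (k : mx_key) : bool :=
  let: (a, b, c, d) := k in ((a * d) %% p == (1 + b * c) %% p)%N.

Definition tmx_mul (M N : T * T * T * T) : T * T * T * T :=
  let: (a, b, c, d) := M in let: (e, f, g, h) := N in
  (tadd (tmul a e) (tmul b g), tadd (tmul a f) (tmul b h),
   tadd (tmul c e) (tmul d g), tadd (tmul c f) (tmul d h)).

Definition tmx_scale (t : T) (M : T * T * T * T) : T * T * T * T :=
  let: (a, b, c, d) := M in (tmul t a, tmul t b, tmul t c, tmul t d).

(* Products of stored matrices carry the factor [scn ^+ 2]. *)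
Definition table_mul_closed : bool :=
  all (fun e1 => all (fun e2 =>
    if lookup (key_mul e1.1 e2.1) tab is Some M then tmx_mul e1.2 e2.2 == tmx_scale tsc M
    else false) tab) tab.

Definition table_covers_SL2 : bool :=
  all (fun a => all (fun b => all (fun c => all (fun d =>
     ~~ key_det1 (a, b, c, d) || (lookup (a, b, c, d) tab != None))
     (iota 0 p)) (iota 0 p)) (iota 0 p)) (iota 0 p).

Definition reduces_to (t : T) (a : nat) : bool := modz (tres t) p == modz (scn * a)%N p.

Definition table_reduces : bool :=
  all (fun e => let: (a, b, c, d) := e.1 in let: (m1, m2, m3, m4) := e.2 in
     [&& reduces_to m1 a, reduces_to m2 b, reduces_to m3 c & reduces_to m4 d]) tab.

Definition table_has_one : bool := lookup (1, 0, 0, 1)%N tab == Some (tsc, tzero, tzero, tsc).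

Hypotheses (tab_mul : table_mul_closed) (tab_cov : table_covers_SL2)
  (tab_res : table_reduces) (tab_one : table_has_one).

Definition tmx_eval (M : T * T * T * T) : 'M[S]_2 :=
  let: (a, b, c, d) := M in mx22 (phi a) (phi b) (phi c) (phi d).

Definition key_of_mx (A : 'M['F_p]_2) : mx_key :=
  (nat_of_ord (A 0 0), nat_of_ord (A 0 1), nat_of_ord (A 1 0), nat_of_ord (A 1 1)).

Definition table_lift (A : 'M['F_p]_2) : 'M[S]_2 :=
  if lookup (key_of_mx A) tab is Some M then isc *: tmx_eval M else 1%:M.

Lemma Fp_val_addmul (x y z w : 'F_p) :
  nat_of_ord (x * y + z * w) = ((nat_of_ord x * nat_of_ord y + nat_of_ord z * nat_of_ord w) %% p)%N.
Proof.
rewrite -[x]natr_Zp -[y]natr_Zp -[z]natr_Zp -[w]natr_Zp -!natrM -natrD.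
by rewrite val_Fp_nat // !natr_Zp.
Qed.

Lemma key_of_mxM (A B : 'M['F_p]_2) : key_of_mx (A *m B) = key_mul (key_of_mx A) (key_of_mx B).
Proof.
rewrite [A]mx22_eta [B]mx22_eta mulmx22 /key_of_mx.
case: (mx22E (A 0 0 * B 0 0 + A 0 1 * B 1 0) (A 0 0 * B 0 1 + A 0 1 * B 1 1)
  (A 1 0 * B 0 0 + A 1 1 * B 1 0) (A 1 0 * B 0 1 + A 1 1 * B 1 1)) => -> -> -> ->.
by rewrite !Fp_val_addmul !mxE.
Qed.

Lemma key_det1_of_mx (A : 'M['F_p]_2) : \det A = 1 -> key_det1 (key_of_mx A).
Proof.
rewrite [A]mx22_eta det_mx22 /key_of_mx !mxE /= => /eqP; rewrite subr_eq => /eqP E.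
have h1 := Fp_val_addmul (A 0 0) (A 1 1) 0 0.
have h2 := Fp_val_addmul 1 1 (A 0 1) (A 1 0).
rewrite !mulr0 addr0 addn0 in h1; rewrite mul1r in h2.
have v1 : nat_of_ord (1 : 'F_p) = 1%N.
  by have := val_Fp_nat pr 1; rewrite modn_small ?prime_gt1.
by apply/eqP; rewrite -h1 E h2 v1 muln1 ?modn_mod.
Qed.

Lemma lookup_det1 (A : 'M['F_p]_2) : \det A = 1 -> exists M, lookup (key_of_mx A) tab = Some M.
Proof.
move=> /key_det1_of_mx kd.
have vi (x : 'F_p) : nat_of_ord x \in iota 0 p.
  by rewrite mem_iota add0n -[X in (_ < X)%N](Fp_cast pr) ltn_ord.
move: tab_cov => /allP /(_ _ (vi (A 0 0))) /allP /(_ _ (vi (A 0 1)))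
  /allP /(_ _ (vi (A 1 0))) /allP /(_ _ (vi (A 1 1))).
by rewrite -/(key_of_mx A) kd /=; case: lookup => // M _; exists M.
Qed.

Lemma lookup_mem k M : lookup k tab = Some M -> (k, M) \in tab.
Proof.
elim: tab => //= e s IH; case: eqP => [<- [<-]|_ /IH h]; last by rewrite inE h orbT.
by rewrite inE; case: e => ? ? /=; rewrite eqxx.
Qed.

Lemma tmx_evalM M N : tmx_eval (tmx_mul M N) = tmx_eval M *m tmx_eval N.
Proof.
case: M => [[[a b] c] d]; case: N => [[[e f] g] h].
by rewrite /= mulmx22 !phiD !phiM.
Qed.

Lemma tmx_evalZ t M : tmx_eval (tmx_scale t M) = phi t *: tmx_eval M.
Proof. by case: M => [[[a b] c] d]; rewrite /= scale_mx22 !phiM. Qed.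

Lemma table_liftM (A B : 'M['F_p]_2) : \det A = 1 -> \det B = 1 ->
  table_lift (A *m B) = table_lift A *m table_lift B.
Proof.
move=> dA dB; have [MA hA] := lookup_det1 dA; have [MB hB] := lookup_det1 dB.
move: tab_mul => /allP /(_ _ (lookup_mem hA)) /allP /(_ _ (lookup_mem hB)) /=.
rewrite /table_lift key_of_mxM hA hB; case: lookup => // M /eqP E.
rewrite -scalemxAl -scalemxAr scalerA -tmx_evalM E tmx_evalZ phi_sc scalerA.
by rewrite -mulrA iscK mulr1.
Qed.

Lemma table_lift1 : table_lift 1%:M = 1%:M.
Proof.
have key1 : key_of_mx (1%:M : 'M['F_p]_2) = (1, 0, 0, 1)%N.
  by rewrite /key_of_mx !mxE /= (Fp_cast pr) modn_small ?prime_gt1.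
by rewrite /table_lift key1 (eqP tab_one) /= scale_mx22 phi_sc phi0 mulr0 iscK mx22_1.
Qed.

Lemma reduces_toP t (a : nat) : reduces_to t a -> resS (isc * phi t) = a%:R.
Proof.
move=> /eqP E.
rewrite (ring_homM resS_hom) phi_res -(Fp_intr_mod pr) E (Fp_intr_mod pr) -pmulrn natrM.
by rewrite mulrA -(ring_hom_nat resS_hom) -(ring_homM resS_hom) iscK (ring_hom1 resS_hom) mul1r.
Qed.

Lemma table_lift_res (A : 'M['F_p]_2) : \det A = 1 -> map_mx resS (table_lift A) = A.
Proof.
move=> dA; have [M hM] := lookup_det1 dA.
move: tab_res => /allP /(_ _ (lookup_mem hM)).
rewrite /table_lift hM /key_of_mx /=.
case: M {hM} => [[[m1 m2] m3] m4] /= /and4P [r1 r2 r3 r4].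
rewrite scale_mx22 map_mx22 (reduces_toP r1) (reduces_toP r2) (reduces_toP r3) (reduces_toP r4).
by rewrite !natr_Zp [RHS]mx22_eta.
Qed.

Lemma table_lift_SL2_section : SL2_section resS table_lift.
Proof. by split; [exact: table_liftM | exact: table_lift1 | exact: table_lift_res]. Qed.

End TableLift.

(* [SL_2(F_2)], the symmetric group on three letters, already lifts to [GL_2(Z)]. *)
Definition tab2 : seq (mx_key * (int * int * int * int)) := [::
  ((0,1,1,0)%N, ((0),(1),(1),(0)));
  ((0,1,1,1)%N, ((0),(-1),(1),(-1)));
  ((1,0,0,1)%N, ((1),(0),(0),(1)));
  ((1,0,1,1)%N, ((-1),(0),(-1),(1)));
  ((1,1,0,1)%N, ((1),(-1),(0),(-1)));
  ((1,1,1,0)%N, ((-1),(1),(-1),(0)))].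

Lemma tab2_mul_closed : table_mul_closed 2 +%R *%R 1 tab2.
Proof. by vm_compute. Qed.
Lemma tab2_covers_SL2 : table_covers_SL2 2 tab2.
Proof. by vm_compute. Qed.
Lemma tab2_reduces : table_reduces 2 id 1 tab2.
Proof. by vm_compute. Qed.
Lemma tab2_has_one : table_has_one 0 1 tab2.
Proof. by vm_compute. Qed.

Lemma SL2_section_Z2 : exists L, SL2_section (@padic_res 0) L.
Proof.
have pr : prime 2 by [].
pose eval (z : int) : Z_2 := z%:~R.
have evalD x y : eval (x + y) = eval x + eval y by apply: intrD.
have evalM x y : eval (x * y) = eval x * eval y by apply: intrM.
have eval_res t : padic_res (eval t) = (id t)%:~R := ring_hom_int (padic_res_hom pr) t.
have eval0 : eval 0 = 0 by [].
have eval_sc : eval 1 = 1%:R by [].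
have iK : (1 : Z_2) * 1%:R = 1 by rewrite mulr1.
by eexists; exact: (table_lift_SL2_section pr (padic_res_hom pr) evalD evalM eval0
  eval_res eval_sc iK tab2_mul_closed tab2_covers_SL2
  tab2_reduces tab2_has_one).
Qed.

(* [SL_2(F_3)] is realised over [Z[1/2, sqrt -2]]; the entries [(a, b)] of [tab3]
   stand for [a + b sqrt -2] and are twice the actual matrix entries. *)
Definition T3 := (int * int)%type.
Definition t3add (x y : T3) : T3 := (x.1 + y.1, x.2 + y.2).
Definition t3mul (x y : T3) : T3 := (x.1 * y.1 - 2 * (x.2 * y.2), x.1 * y.2 + x.2 * y.1).

Definition tab3 : seq (mx_key * (T3 * T3 * T3 * T3)) := [::
  ((0,1,2,0)%N, ((0, 0),(2, 0),(-2, 0),(0, 0)));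
  ((0,1,2,1)%N, ((2, 1),(-2, 1),(0, 1),(0, -1)));
  ((0,1,2,2)%N, ((-2, -1),(0, -1),(2, -1),(0, 1)));
  ((0,2,1,0)%N, ((0, 0),(-2, 0),(2, 0),(0, 0)));
  ((0,2,1,1)%N, ((2, 1),(0, 1),(-2, 1),(0, -1)));
  ((0,2,1,2)%N, ((-2, -1),(2, -1),(0, -1),(0, 1)));
  ((1,0,0,1)%N, ((2, 0),(0, 0),(0, 0),(2, 0)));
  ((1,0,1,1)%N, ((-2, 1),(-2, -1),(0, -1),(0, -1)));
  ((1,0,2,1)%N, ((0, -1),(2, 1),(0, 1),(-2, 1)));
  ((1,1,0,1)%N, ((-2, 1),(0, -1),(-2, -1),(0, -1)));
  ((1,1,1,2)%N, ((2, 0),(0, 2),(0, 2),(-2, 0)));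
  ((1,1,2,0)%N, ((0, -1),(0, -1),(2, -1),(2, 1)));
  ((1,2,0,1)%N, ((0, -1),(0, 1),(2, 1),(-2, 1)));
  ((1,2,1,0)%N, ((0, -1),(2, -1),(0, -1),(2, 1)));
  ((1,2,2,2)%N, ((0, 2),(-2, 0),(-2, 0),(0, -2)));
  ((2,0,0,2)%N, ((-2, 0),(0, 0),(0, 0),(-2, 0)));
  ((2,0,1,2)%N, ((0, 1),(-2, -1),(0, -1),(2, -1)));
  ((2,0,2,2)%N, ((2, -1),(2, 1),(0, 1),(0, 1)));
  ((2,1,0,2)%N, ((0, 1),(0, -1),(-2, -1),(2, -1)));
  ((2,1,1,1)%N, ((0, -2),(2, 0),(2, 0),(0, 2)));
  ((2,1,2,0)%N, ((0, 1),(-2, 1),(0, 1),(-2, -1)));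
  ((2,2,0,2)%N, ((2, -1),(0, 1),(2, 1),(0, 1)));
  ((2,2,1,0)%N, ((0, 1),(0, 1),(-2, 1),(-2, -1)));
  ((2,2,2,1)%N, ((-2, 0),(0, -2),(0, -2),(2, 0)))].

Lemma tab3_mul_closed : table_mul_closed 3 t3add t3mul (2, 0) tab3.
Proof. by vm_compute. Qed.
Lemma tab3_covers_SL2 : table_covers_SL2 3 tab3.
Proof. by vm_compute. Qed.
Lemma tab3_reduces : table_reduces 3 (fun t : T3 => t.1 + t.2) 2 tab3.
Proof. by vm_compute. Qed.
Lemma tab3_has_one : table_has_one (0, 0) (2, 0) tab3.
Proof. by vm_compute. Qed.

Lemma SL2_section_Z3 : exists L, SL2_section (@padic_res 1) L.
Proof.
have pr : prime 3 by [].
have [s [s_sq s_res]] := hensel_sqrt pr isT (isT : approx_sqrt 1 (-2) 0 1).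
pose eval (x : T3) : Z_3 := x.1%:~R + x.2%:~R * s.
have evalD x y : eval (t3add x y) = eval x + eval y by rewrite /eval /= !intrD; ring.
have evalM x y : eval (t3mul x y) = eval x * eval y by rewrite /eval /=; ring: s_sq.
have eval_res t : padic_res (eval t) = (t.1 + t.2)%:~R.
  have h := padic_res_hom pr.
  by rewrite /eval (ring_homD h) (ring_homM h) !(ring_hom_int h) s_res mulr1 -intrD.
have [i iK] : exists i : Z_3, i * 2%:R = 1.
  have two_res : padic_res (2%:R : Z_3) != 0 by rewrite (ring_hom_nat (padic_res_hom pr)).
  by have [i hi] := padic_unit pr two_res; exists i; rewrite mulrC.
have eval0 : eval (0, 0) = 0 by rewrite /eval /= mul0r addr0.
have eval_sc : eval (2, 0) = 2%:R by rewrite /eval /= mul0r addr0.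
by eexists; exact: (table_lift_SL2_section pr (padic_res_hom pr) evalD evalM eval0
  eval_res eval_sc iK tab3_mul_closed tab3_covers_SL2
  tab3_reduces tab3_has_one).
Qed.

(* [SL_2(F_5)] is realised over [Z[1/2, sqrt 5, i]]; the entries [(a, b, c, d)]
   of [tab5] stand for [a + b sqrt5 + c i + d i sqrt5] and are four times the
   actual matrix entries; [i] is a square root of [-1] in [Z_5]. *)
Definition T5 := (int * int * int * int)%type.
Definition t5add (x y : T5) : T5 :=
  (x.1.1.1 + y.1.1.1, x.1.1.2 + y.1.1.2, x.1.2 + y.1.2, x.2 + y.2).
Definition t5mul (x y : T5) : T5 :=
  let: (a, b, c, d) := x in let: (e, f, g, h) := y in
  (a * e + 5 * (b * f) - c * g - 5 * (d * h), a * f + b * e - c * h - d * g,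
   a * g + c * e + 5 * (b * h) + 5 * (d * f), a * h + d * e + b * g + c * f).

Definition tab5 : seq (mx_key * (T5 * T5 * T5 * T5)) := [::
  ((0,1,4,0)%N, ((0, 0, 0, 0),(4, 0, 0, 0),(-4, 0, 0, 0),(0, 0, 0, 0)));
  ((0,1,4,1)%N, ((2, 0, -1, -1),(-1, 1, 0, 0),(1, -1, 0, 0),(2, 0, 1, 1)));
  ((0,1,4,2)%N, ((-1, 1, -2, 0),(-1, -1, 0, 0),(1, 1, 0, 0),(-1, 1, 2, 0)));
  ((0,1,4,3)%N, ((1, -1, 2, 0),(-1, -1, 0, 0),(1, 1, 0, 0),(1, -1, -2, 0)));
  ((0,1,4,4)%N, ((-2, 0, 1, 1),(-1, 1, 0, 0),(1, -1, 0, 0),(-2, 0, -1, -1)));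
  ((0,2,2,0)%N, ((0, 0, 0, 0),(0, 0, 4, 0),(0, 0, 4, 0),(0, 0, 0, 0)));
  ((0,2,2,1)%N, ((2, 0, -1, 1),(0, 0, -1, -1),(0, 0, -1, -1),(2, 0, 1, -1)));
  ((0,2,2,2)%N, ((-1, -1, -2, 0),(0, 0, -1, 1),(0, 0, -1, 1),(-1, -1, 2, 0)));
  ((0,2,2,3)%N, ((1, 1, 2, 0),(0, 0, -1, 1),(0, 0, -1, 1),(1, 1, -2, 0)));
  ((0,2,2,4)%N, ((-2, 0, 1, -1),(0, 0, -1, -1),(0, 0, -1, -1),(-2, 0, -1, 1)));
  ((0,3,3,0)%N, ((0, 0, 0, 0),(0, 0, -4, 0),(0, 0, -4, 0),(0, 0, 0, 0)));
  ((0,3,3,1)%N, ((2, 0, -1, 1),(0, 0, 1, 1),(0, 0, 1, 1),(2, 0, 1, -1)));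
  ((0,3,3,2)%N, ((-1, -1, -2, 0),(0, 0, 1, -1),(0, 0, 1, -1),(-1, -1, 2, 0)));
  ((0,3,3,3)%N, ((1, 1, 2, 0),(0, 0, 1, -1),(0, 0, 1, -1),(1, 1, -2, 0)));
  ((0,3,3,4)%N, ((-2, 0, 1, -1),(0, 0, 1, 1),(0, 0, 1, 1),(-2, 0, -1, 1)));
  ((0,4,1,0)%N, ((0, 0, 0, 0),(-4, 0, 0, 0),(4, 0, 0, 0),(0, 0, 0, 0)));
  ((0,4,1,1)%N, ((2, 0, -1, -1),(1, -1, 0, 0),(-1, 1, 0, 0),(2, 0, 1, 1)));
  ((0,4,1,2)%N, ((-1, 1, -2, 0),(1, 1, 0, 0),(-1, -1, 0, 0),(-1, 1, 2, 0)));
  ((0,4,1,3)%N, ((1, -1, 2, 0),(1, 1, 0, 0),(-1, -1, 0, 0),(1, -1, -2, 0)));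
  ((0,4,1,4)%N, ((-2, 0, 1, 1),(1, -1, 0, 0),(-1, 1, 0, 0),(-2, 0, -1, -1)));
  ((1,0,0,1)%N, ((4, 0, 0, 0),(0, 0, 0, 0),(0, 0, 0, 0),(4, 0, 0, 0)));
  ((1,0,1,1)%N, ((-1, 1, 0, 0),(-2, 0, 1, 1),(2, 0, 1, 1),(-1, 1, 0, 0)));
  ((1,0,2,1)%N, ((-1, -1, 0, 0),(1, -1, 2, 0),(-1, 1, 2, 0),(-1, -1, 0, 0)));
  ((1,0,3,1)%N, ((-1, -1, 0, 0),(-1, 1, -2, 0),(1, -1, -2, 0),(-1, -1, 0, 0)));
  ((1,0,4,1)%N, ((-1, 1, 0, 0),(2, 0, -1, -1),(-2, 0, -1, -1),(-1, 1, 0, 0)));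
  ((1,1,0,1)%N, ((-1, 1, 0, 0),(2, 0, 1, 1),(-2, 0, 1, 1),(-1, 1, 0, 0)));
  ((1,1,1,2)%N, ((1, -1, -1, -1),(0, 0, 2, 0),(0, 0, 2, 0),(1, -1, 1, 1)));
  ((1,1,2,3)%N, ((-2, 0, -2, 0),(-2, 0, -2, 0),(2, 0, -2, 0),(-2, 0, 2, 0)));
  ((1,1,3,4)%N, ((0, 0, 2, 0),(1, -1, -1, -1),(-1, 1, -1, -1),(0, 0, -2, 0)));
  ((1,1,4,0)%N, ((2, 0, 1, 1),(-1, 1, 0, 0),(1, -1, 0, 0),(2, 0, -1, -1)));
  ((1,2,0,1)%N, ((-1, -1, 0, 0),(-1, 1, 2, 0),(1, -1, 2, 0),(-1, -1, 0, 0)));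
  ((1,2,1,3)%N, ((-2, 0, -2, 0),(2, 0, -2, 0),(-2, 0, -2, 0),(-2, 0, 2, 0)));
  ((1,2,2,0)%N, ((2, 0, 1, -1),(0, 0, -1, -1),(0, 0, -1, -1),(2, 0, -1, 1)));
  ((1,2,3,2)%N, ((1, 1, -1, 1),(-2, 0, 0, 0),(2, 0, 0, 0),(1, 1, 1, -1)));
  ((1,2,4,4)%N, ((0, 0, 2, 0),(1, -1, 1, 1),(-1, 1, 1, 1),(0, 0, -2, 0)));
  ((1,3,0,1)%N, ((-1, -1, 0, 0),(1, -1, -2, 0),(-1, 1, -2, 0),(-1, -1, 0, 0)));
  ((1,3,1,4)%N, ((0, 0, 2, 0),(-1, 1, -1, -1),(1, -1, -1, -1),(0, 0, -2, 0)));
  ((1,3,2,2)%N, ((1, 1, -1, 1),(2, 0, 0, 0),(-2, 0, 0, 0),(1, 1, 1, -1)));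
  ((1,3,3,0)%N, ((2, 0, 1, -1),(0, 0, 1, 1),(0, 0, 1, 1),(2, 0, -1, 1)));
  ((1,3,4,3)%N, ((-2, 0, -2, 0),(-2, 0, 2, 0),(2, 0, 2, 0),(-2, 0, 2, 0)));
  ((1,4,0,1)%N, ((-1, 1, 0, 0),(-2, 0, -1, -1),(2, 0, -1, -1),(-1, 1, 0, 0)));
  ((1,4,1,0)%N, ((2, 0, 1, 1),(1, -1, 0, 0),(-1, 1, 0, 0),(2, 0, -1, -1)));
  ((1,4,2,4)%N, ((0, 0, 2, 0),(-1, 1, 1, 1),(1, -1, 1, 1),(0, 0, -2, 0)));
  ((1,4,3,3)%N, ((-2, 0, -2, 0),(2, 0, 2, 0),(-2, 0, 2, 0),(-2, 0, 2, 0)));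
  ((1,4,4,2)%N, ((1, -1, -1, -1),(0, 0, -2, 0),(0, 0, -2, 0),(1, -1, 1, 1)));
  ((2,0,0,3)%N, ((0, 0, 4, 0),(0, 0, 0, 0),(0, 0, 0, 0),(0, 0, -4, 0)));
  ((2,0,1,3)%N, ((0, 0, -1, -1),(-2, 0, 1, -1),(2, 0, 1, -1),(0, 0, 1, 1)));
  ((2,0,2,3)%N, ((0, 0, -1, 1),(1, 1, 2, 0),(-1, -1, 2, 0),(0, 0, 1, -1)));
  ((2,0,3,3)%N, ((0, 0, -1, 1),(-1, -1, -2, 0),(1, 1, -2, 0),(0, 0, 1, -1)));
  ((2,0,4,3)%N, ((0, 0, -1, -1),(2, 0, -1, 1),(-2, 0, -1, 1),(0, 0, 1, 1)));
  ((2,1,0,3)%N, ((0, 0, -1, -1),(2, 0, 1, -1),(-2, 0, 1, -1),(0, 0, 1, 1)));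
  ((2,1,1,1)%N, ((1, -1, 1, 1),(0, 0, 2, 0),(0, 0, 2, 0),(1, -1, -1, -1)));
  ((2,1,2,4)%N, ((2, 0, -2, 0),(-2, 0, -2, 0),(2, 0, -2, 0),(2, 0, 2, 0)));
  ((2,1,3,2)%N, ((-2, 0, 0, 0),(1, 1, -1, 1),(-1, -1, -1, 1),(-2, 0, 0, 0)));
  ((2,1,4,0)%N, ((-1, 1, 2, 0),(-1, -1, 0, 0),(1, 1, 0, 0),(-1, 1, -2, 0)));
  ((2,2,0,3)%N, ((0, 0, -1, 1),(-1, -1, 2, 0),(1, 1, 2, 0),(0, 0, 1, -1)));
  ((2,2,1,4)%N, ((2, 0, -2, 0),(2, 0, -2, 0),(-2, 0, -2, 0),(2, 0, 2, 0)));
  ((2,2,2,0)%N, ((-1, -1, 2, 0),(0, 0, -1, 1),(0, 0, -1, 1),(-1, -1, -2, 0)));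
  ((2,2,3,1)%N, ((1, 1, 1, -1),(-2, 0, 0, 0),(2, 0, 0, 0),(1, 1, -1, 1)));
  ((2,2,4,2)%N, ((-2, 0, 0, 0),(1, 1, 1, -1),(-1, -1, 1, -1),(-2, 0, 0, 0)));
  ((2,3,0,3)%N, ((0, 0, -1, 1),(1, 1, -2, 0),(-1, -1, -2, 0),(0, 0, 1, -1)));
  ((2,3,1,2)%N, ((-2, 0, 0, 0),(-1, -1, -1, 1),(1, 1, -1, 1),(-2, 0, 0, 0)));
  ((2,3,2,1)%N, ((1, 1, 1, -1),(2, 0, 0, 0),(-2, 0, 0, 0),(1, 1, -1, 1)));
  ((2,3,3,0)%N, ((-1, -1, 2, 0),(0, 0, 1, -1),(0, 0, 1, -1),(-1, -1, -2, 0)));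
  ((2,3,4,4)%N, ((2, 0, -2, 0),(-2, 0, 2, 0),(2, 0, 2, 0),(2, 0, 2, 0)));
  ((2,4,0,3)%N, ((0, 0, -1, -1),(-2, 0, -1, 1),(2, 0, -1, 1),(0, 0, 1, 1)));
  ((2,4,1,0)%N, ((-1, 1, 2, 0),(1, 1, 0, 0),(-1, -1, 0, 0),(-1, 1, -2, 0)));
  ((2,4,2,2)%N, ((-2, 0, 0, 0),(-1, -1, 1, -1),(1, 1, 1, -1),(-2, 0, 0, 0)));
  ((2,4,3,4)%N, ((2, 0, -2, 0),(2, 0, 2, 0),(-2, 0, 2, 0),(2, 0, 2, 0)));
  ((2,4,4,1)%N, ((1, -1, 1, 1),(0, 0, -2, 0),(0, 0, -2, 0),(1, -1, -1, -1)));
  ((3,0,0,2)%N, ((0, 0, -4, 0),(0, 0, 0, 0),(0, 0, 0, 0),(0, 0, 4, 0)));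
  ((3,0,1,2)%N, ((0, 0, 1, 1),(-2, 0, 1, -1),(2, 0, 1, -1),(0, 0, -1, -1)));
  ((3,0,2,2)%N, ((0, 0, 1, -1),(1, 1, 2, 0),(-1, -1, 2, 0),(0, 0, -1, 1)));
  ((3,0,3,2)%N, ((0, 0, 1, -1),(-1, -1, -2, 0),(1, 1, -2, 0),(0, 0, -1, 1)));
  ((3,0,4,2)%N, ((0, 0, 1, 1),(2, 0, -1, 1),(-2, 0, -1, 1),(0, 0, -1, -1)));
  ((3,1,0,2)%N, ((0, 0, 1, 1),(2, 0, 1, -1),(-2, 0, 1, -1),(0, 0, -1, -1)));
  ((3,1,1,4)%N, ((-1, 1, -1, -1),(0, 0, 2, 0),(0, 0, 2, 0),(-1, 1, 1, 1)));
  ((3,1,2,1)%N, ((-2, 0, 2, 0),(-2, 0, -2, 0),(2, 0, -2, 0),(-2, 0, -2, 0)));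
  ((3,1,3,3)%N, ((2, 0, 0, 0),(1, 1, -1, 1),(-1, -1, -1, 1),(2, 0, 0, 0)));
  ((3,1,4,0)%N, ((1, -1, -2, 0),(-1, -1, 0, 0),(1, 1, 0, 0),(1, -1, 2, 0)));
  ((3,2,0,2)%N, ((0, 0, 1, -1),(-1, -1, 2, 0),(1, 1, 2, 0),(0, 0, -1, 1)));
  ((3,2,1,1)%N, ((-2, 0, 2, 0),(2, 0, -2, 0),(-2, 0, -2, 0),(-2, 0, -2, 0)));
  ((3,2,2,0)%N, ((1, 1, -2, 0),(0, 0, -1, 1),(0, 0, -1, 1),(1, 1, 2, 0)));
  ((3,2,3,4)%N, ((-1, -1, -1, 1),(-2, 0, 0, 0),(2, 0, 0, 0),(-1, -1, 1, -1)));
  ((3,2,4,3)%N, ((2, 0, 0, 0),(1, 1, 1, -1),(-1, -1, 1, -1),(2, 0, 0, 0)));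
  ((3,3,0,2)%N, ((0, 0, 1, -1),(1, 1, -2, 0),(-1, -1, -2, 0),(0, 0, -1, 1)));
  ((3,3,1,3)%N, ((2, 0, 0, 0),(-1, -1, -1, 1),(1, 1, -1, 1),(2, 0, 0, 0)));
  ((3,3,2,4)%N, ((-1, -1, -1, 1),(2, 0, 0, 0),(-2, 0, 0, 0),(-1, -1, 1, -1)));
  ((3,3,3,0)%N, ((1, 1, -2, 0),(0, 0, 1, -1),(0, 0, 1, -1),(1, 1, 2, 0)));
  ((3,3,4,1)%N, ((-2, 0, 2, 0),(-2, 0, 2, 0),(2, 0, 2, 0),(-2, 0, -2, 0)));
  ((3,4,0,2)%N, ((0, 0, 1, 1),(-2, 0, -1, 1),(2, 0, -1, 1),(0, 0, -1, -1)));
  ((3,4,1,0)%N, ((1, -1, -2, 0),(1, 1, 0, 0),(-1, -1, 0, 0),(1, -1, 2, 0)));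
  ((3,4,2,3)%N, ((2, 0, 0, 0),(-1, -1, 1, -1),(1, 1, 1, -1),(2, 0, 0, 0)));
  ((3,4,3,1)%N, ((-2, 0, 2, 0),(2, 0, 2, 0),(-2, 0, 2, 0),(-2, 0, -2, 0)));
  ((3,4,4,4)%N, ((-1, 1, -1, -1),(0, 0, -2, 0),(0, 0, -2, 0),(-1, 1, 1, 1)));
  ((4,0,0,4)%N, ((-4, 0, 0, 0),(0, 0, 0, 0),(0, 0, 0, 0),(-4, 0, 0, 0)));
  ((4,0,1,4)%N, ((1, -1, 0, 0),(-2, 0, 1, 1),(2, 0, 1, 1),(1, -1, 0, 0)));
  ((4,0,2,4)%N, ((1, 1, 0, 0),(1, -1, 2, 0),(-1, 1, 2, 0),(1, 1, 0, 0)));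
  ((4,0,3,4)%N, ((1, 1, 0, 0),(-1, 1, -2, 0),(1, -1, -2, 0),(1, 1, 0, 0)));
  ((4,0,4,4)%N, ((1, -1, 0, 0),(2, 0, -1, -1),(-2, 0, -1, -1),(1, -1, 0, 0)));
  ((4,1,0,4)%N, ((1, -1, 0, 0),(2, 0, 1, 1),(-2, 0, 1, 1),(1, -1, 0, 0)));
  ((4,1,1,3)%N, ((-1, 1, 1, 1),(0, 0, 2, 0),(0, 0, 2, 0),(-1, 1, -1, -1)));
  ((4,1,2,2)%N, ((2, 0, 2, 0),(-2, 0, -2, 0),(2, 0, -2, 0),(2, 0, -2, 0)));
  ((4,1,3,1)%N, ((0, 0, -2, 0),(1, -1, -1, -1),(-1, 1, -1, -1),(0, 0, 2, 0)));
  ((4,1,4,0)%N, ((-2, 0, -1, -1),(-1, 1, 0, 0),(1, -1, 0, 0),(-2, 0, 1, 1)));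
  ((4,2,0,4)%N, ((1, 1, 0, 0),(-1, 1, 2, 0),(1, -1, 2, 0),(1, 1, 0, 0)));
  ((4,2,1,2)%N, ((2, 0, 2, 0),(2, 0, -2, 0),(-2, 0, -2, 0),(2, 0, -2, 0)));
  ((4,2,2,0)%N, ((-2, 0, -1, 1),(0, 0, -1, -1),(0, 0, -1, -1),(-2, 0, 1, -1)));
  ((4,2,3,3)%N, ((-1, -1, 1, -1),(-2, 0, 0, 0),(2, 0, 0, 0),(-1, -1, -1, 1)));
  ((4,2,4,1)%N, ((0, 0, -2, 0),(1, -1, 1, 1),(-1, 1, 1, 1),(0, 0, 2, 0)));
  ((4,3,0,4)%N, ((1, 1, 0, 0),(1, -1, -2, 0),(-1, 1, -2, 0),(1, 1, 0, 0)));
  ((4,3,1,1)%N, ((0, 0, -2, 0),(-1, 1, -1, -1),(1, -1, -1, -1),(0, 0, 2, 0)));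
  ((4,3,2,3)%N, ((-1, -1, 1, -1),(2, 0, 0, 0),(-2, 0, 0, 0),(-1, -1, -1, 1)));
  ((4,3,3,0)%N, ((-2, 0, -1, 1),(0, 0, 1, 1),(0, 0, 1, 1),(-2, 0, 1, -1)));
  ((4,3,4,2)%N, ((2, 0, 2, 0),(-2, 0, 2, 0),(2, 0, 2, 0),(2, 0, -2, 0)));
  ((4,4,0,4)%N, ((1, -1, 0, 0),(-2, 0, -1, -1),(2, 0, -1, -1),(1, -1, 0, 0)));
  ((4,4,1,0)%N, ((-2, 0, -1, -1),(1, -1, 0, 0),(-1, 1, 0, 0),(-2, 0, 1, 1)));
  ((4,4,2,1)%N, ((0, 0, -2, 0),(-1, 1, 1, 1),(1, -1, 1, 1),(0, 0, 2, 0)));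
  ((4,4,3,2)%N, ((2, 0, 2, 0),(2, 0, 2, 0),(-2, 0, 2, 0),(2, 0, -2, 0)));
  ((4,4,4,3)%N, ((-1, 1, 1, 1),(0, 0, -2, 0),(0, 0, -2, 0),(-1, 1, -1, -1)))].

Lemma tab5_mul_closed : table_mul_closed 5 t5add t5mul (4, 0, 0, 0) tab5.
Proof. by vm_compute. Qed.
Lemma tab5_covers_SL2 : table_covers_SL2 5 tab5.
Proof. by vm_compute. Qed.
Lemma tab5_reduces : table_reduces 5 (fun t : T5 => t.1.1.1 + 2 * t.1.2) 4 tab5.
Proof. by vm_compute. Qed.
Lemma tab5_has_one : table_has_one (0, 0, 0, 0) (4, 0, 0, 0) tab5.
Proof. by vm_compute. Qed.

Lemma SL2_section_Z5s : exists L, SL2_section Z5s_res L.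
Proof.
have pr : prime 5 by [].
have [i [i_sq i_res]] := hensel_sqrt pr isT (isT : approx_sqrt 3 (-1) 0 2).
pose sqrtm1 : Z5sqrt5 := Z5s i 0.
have sqrtm1_sq : sqrtm1 * sqrtm1 = - 1.
  by apply: Z5s_eq; rewrite /= ?i_sq ?mulr0 ?mul0r ?addr0 ?oppr0.
have sqrt5_sq : sqrt5 * sqrt5 = 5%:R.
  by rewrite -expr2 sqrt5_expr2 Z5s_natr.
pose eval (x : T5) : Z5sqrt5 :=
  x.1.1.1%:~R + x.1.1.2%:~R * sqrt5 + x.1.2%:~R * sqrtm1 + x.2%:~R * (sqrtm1 * sqrt5).
have evalD x y : eval (t5add x y) = eval x + eval y by rewrite /eval /= !intrD; ring.
have evalM x y : eval (t5mul x y) = eval x * eval y.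
  by case: x y => [[[a b] c] d] [[[e f] g] h]; rewrite /eval /=; ring: sqrtm1_sq sqrt5_sq.
have eval_res t : Z5s_res (eval t) = (t.1.1.1 + 2 * t.1.2)%:~R.
  have h := Z5s_res_hom; have sqrt5_res : Z5s_res sqrt5 = 0 by [].
  rewrite /eval !(ring_homD h) !(ring_homM h) !(ring_hom_int h) sqrt5_res.
  by rewrite [Z5s_res sqrtm1]i_res !mulr0 !addr0 intrD intrM mulrC.
have [j jK] : exists j : Z5sqrt5, j * 4%:R = 1.
  have four_res : Z5s_res (4%:R : Z5sqrt5) != 0 by rewrite (ring_hom_nat Z5s_res_hom).
  by have [j hj] := Z5s_unit four_res; exists j; rewrite mulrC.
have eval0 : eval (0, 0, 0, 0) = 0 by rewrite /eval /= !mul0r !addr0.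
have eval_sc : eval (4, 0, 0, 0) = 4%:R by rewrite /eval /= !mul0r !addr0.
by eexists; exact: (table_lift_SL2_section pr Z5s_res_hom evalD evalM eval0
  eval_res eval_sc jK tab5_mul_closed tab5_covers_SL2
  tab5_reduces tab5_has_one).
Qed.

Theorem mainTheorem8 :
  (forall (R : comNzRingType) (resR : R -> 'F_2), CObj resR ->
     CObj (@padic_res 0) /\
     exists rho : 'M[R]_2 -> 'M[Z_2]_2, is_lift resR (@padic_res 0) rho) /\
  (forall (R : comNzRingType) (resR : R -> 'F_3), CObj resR ->
     CObj (@padic_res 1) /\
     exists rho : 'M[R]_2 -> 'M[Z_3]_2, is_lift resR (@padic_res 1) rho) /\
  (forall (R : comNzRingType) (resR : R -> 'F_5), CObj resR ->
     CObj Z5s_res /\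
     exists rho : 'M[R]_2 -> 'M[Z5sqrt5]_2, is_lift resR Z5s_res rho) /\
  (forall p : nat, p \in [:: 2; 3; 5]%N ->
   forall (R : comNzRingType) (resR : R -> 'F_p), CObj resR ->
     ~ universal_lift resR resR (fun g : 'M[R]_2 => g)).
Proof.
have [pr2 pr3 pr5] : [/\ prime 2, prime 3 & prime 5] by [].
have [L2 L2S] := SL2_section_Z2; have [L3 L3S] := SL2_section_Z3.
have [L5 L5S] := SL2_section_Z5s.
have Z2 := SL2_section_not_universal pr2 (padic_CObj pr2) (padic_natr_neq0 0) L2S.
have Z3 := SL2_section_not_universal pr3 (padic_CObj pr3) (padic_natr_neq0 1) L3S.
have Z5 := SL2_section_not_universal pr5 Z5s_CObj Z5s_natr5_neq0 L5S.
split; [|split; [|split]].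
- by move=> R resR CR; split; [exact: padic_CObj | exact: (Z2 _ _ CR).1].
- by move=> R resR CR; split; [exact: padic_CObj | exact: (Z3 _ _ CR).1].
- by move=> R resR CR; split; [exact: Z5s_CObj | exact: (Z5 _ _ CR).1].
move=> p; rewrite !inE => /or3P [] /eqP -> R resR CR.
- exact: (Z2 _ _ CR).2.
- exact: (Z3 _ _ CR).2.
- exact: (Z5 _ _ CR).2.
Qed.
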